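(* Let $l$ and $m$ be positive integers and let $q(x)=x^6-(l+m+3)x^4+(lm+l+m+3)x^2-1$. Suppose $\pm\theta_1,\pm\theta_2,\pm\theta_3$ are the six roots of $q(x)$ in its splitting field over $\mathbb{Q}$. If $q(x)$ is irreducible over $\mathbb{Q}$, then $1,\theta_1,\theta_2,\theta_3$ are linearly independent over $\mathbb{Q}$.
   Context: The roots of $q$ are simple, nonzero and real, and come in pairs $\pm\theta_j$; the labeling means the six roots are $\theta_1,-\theta_1,\theta_2,-\theta_2,\theta_3,-\theta_3$. *)

From HB Require Import structures.
From mathcomp Require Import all_boot all_order all_algebra all_field.
Set Implicit Arguments. Unset Strict Implicit. Unset Printing Implicit Defensive.
Import GRing.Theory Num.Theory.
Local Open Scope ring_scope.

Definition q_lm (l m : nat) : {poly rat} :=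
  'X^6 - (l + m + 3)%:R *: 'X^4 + (l * m + l + m + 3)%:R *: 'X^2 - 1.

(* As q is irreducible, some Q-automorphism g of the splitting field sends t1 to -t1.
   Since q(0) = -1, the product t1 t2 t3 = +-1 is rational, hence fixed by g; so g, or
   g o g when g exchanges +-t2 with +-t3, fixes one ti and negates the other two.
   Applying it to a rational relation a + b1 t1 + b2 t2 + b3 t3 = 0 and adding gives
   a + bi ti = 0, hence a = bi = 0 since ti has degree 6.  The remaining relation
   bj tj + bk tk = 0 forces tk = c tj with c rational unless bj = bk = 0; but then
   q(cX) - c^6 q(X) has degree < 6 and vanishes at tj, so c^6 = 1 and tk = +-tj,
   which the separability of q excludes. *)

From mathcomp Require Import all_boot all_order all_algebra all_field.
From mathcomp Require Import ring.
Set Implicit Arguments.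
Unset Strict Implicit.
Unset Printing Implicit Defensive.

Import GRing.Theory Num.Theory.
Local Open Scope ring_scope.

Section IrreducibleRoots.

Variables (F : fieldType) (L : fieldExtType F) (p : {poly F}).
Hypothesis p_irr : irreducible_poly p.
Local Notation lift q := (map_poly (in_alg L) q).

Lemma irr_root_poly_eq0 {x} {P : {poly F}} :
  root (lift p) x -> (size P < size p)%N -> root (lift P) x -> P = 0.
Proof.
move=> px0 ltPp Px0; apply/eqP; apply: contraTT ltPp => nzP; rewrite -leqNgt.
exact: (subfx_irreducibleP px0 (irredp_neq0 p_irr)).2 p_irr P Px0 nzP.
Qed.

Lemma minPoly_eqp_irr {x} : root (lift p) x -> minPoly 1 x %= lift p.
Proof.
move=> px0; have /polyOver1P[m Dm] := minPolyOver 1 x.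
have m_dvd_p : m %| p.
  by rewrite -(dvdp_map (in_alg L)) -Dm minPoly_dvdp //; apply/polyOver1P; exists p.
have nz_m : m != 0.
  by rewrite -(map_poly_eq0 (in_alg L)) -Dm monic_neq0 ?monic_minPoly.
have mx0 : root (lift m) x by rewrite -Dm root_minPoly.
have le_pm := (subfx_irreducibleP px0 (irredp_neq0 p_irr)).2 p_irr m mx0 nz_m.
rewrite Dm eqp_map -dvdp_size_eqp // eqn_leq le_pm andbT.
by rewrite dvdp_leq ?irredp_neq0.
Qed.

Lemma root_map_neq0 {x} : p.[0] != 0 -> root (lift p) x -> x != 0.
Proof.
move=> p0 px0; apply: contraNneq p0 => x0.
by move: px0; rewrite x0 -(rmorph0 (in_alg L)) rootE horner_map fmorph_eq0.
Qed.

Lemma irr_root_lin_eq0 x (a b : F) :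
  (2 < size p)%N -> root (lift p) x -> a%:A + b *: x = 0 -> a = 0 /\ b = 0.
Proof.
move=> gt2p px0 abx0; pose P := b *: 'X + a%:P.
have P0 : P = 0.
  apply: (irr_root_poly_eq0 px0).
    apply: leq_ltn_trans gt2p; rewrite (leq_trans (size_polyD _ _)) // geq_max.
    rewrite (leq_trans (size_scale_leq _ _)) ?size_polyX //.
    exact: leq_trans (size_polyC_leq1 _) _.
  rewrite /root rmorphD /= map_polyZ map_polyX map_polyC !hornerE /=.
  by rewrite mulr_algl addrC abx0.
have := congr1 (coefp 0) P0; have := congr1 (coefp 1) P0.
by rewrite /= !coefD !coefZ !coefX !coefC /= !mulr1 !mulr0 addr0 add0r => -> ->.
Qed.

Lemma irr_root_scale_expn x c :
  p.[0] != 0 -> root (lift p) x -> root (lift p) (c *: x) -> c ^+ (size p).-1 = 1.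
Proof.
move=> p0 px0 pcx0; set n := (size p).-1.
have nz_c : c != 0.
  by apply: contraNneq (root_map_neq0 p0 pcx0) => ->; rewrite scale0r.
have size_cX : size (c *: 'X : {poly F}) = 2 by rewrite size_scale ?size_polyX.
have size_p : size p = n.+1 by rewrite prednK // ltnW // p_irr.1.
have lead_pc : (p \Po (c *: 'X))`_n = c ^+ n * p`_n.
  have := @lead_coef_comp _ p (c *: 'X); rewrite size_cX => /(_ isT).
  by rewrite lead_coefE size_comp_poly2 // lead_coefZ lead_coefX mulr1 mulrC.
pose P := p \Po (c *: 'X) - c ^+ n *: p.
have ltPp : (size P < size p)%N.
  rewrite size_p ltnS; apply/leq_sizeP => j; rewrite leq_eqVlt => /orP[/eqP <- | ltnj].
    by rewrite coefB coefZ lead_pc subrr.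
  rewrite coefB coefZ !nth_default ?mulr0 ?subr0 ?size_comp_poly2 ?size_p //.
have Px0 : root (lift P) x.
  rewrite /root rmorphB /= map_polyZ map_comp_poly /= map_polyZ map_polyX.
  by rewrite !hornerE horner_comp !hornerE mulr_algl (rootP pcx0) (rootP px0) mulr0 subr0.
have := congr1 (horner^~ 0) (irr_root_poly_eq0 px0 ltPp Px0).
rewrite /= !hornerE horner_comp !hornerE.
move/eqP; rewrite -{1}(mul1r p.[0]) -mulrBl mulf_eq0 (negPf p0) orbF subr_eq0.
by rewrite eq_sym => /eqP.
Qed.

Lemma kHom_conj_root (rs : seq L) x y :
  lift p = \prod_(r <- rs) ('X - r%:P) -> x \in rs -> y \in rs ->
  exists2 g : 'End(L), kHom 1 <<1 & rs>> g & g x = y.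
Proof.
move=> p_split rs_x rs_y; have p_over : lift p \is a polyOver 1%VS.
  by apply/polyOver1P; exists p.
have px0 : root (lift p) x by rewrite p_split root_prod_XsubC.
have conj_y : root (map_poly \1%VF (minPoly 1 x)) y.
  rewrite map_poly_id => [|z _]; last exact: id_lfunE.
  by rewrite (eqp_root (minPoly_eqp_irr px0)) p_split root_prod_XsubC.
have homf : kHom 1 <<1; x>> (kHomExtend 1 \1 x y) by apply: kHomExtendP; rewrite ?kHom1.
have split_x : splittingFieldFor <<1; x>> (lift p) <<1 & rs>>.
  apply: (@splittingFieldForS _ _ 1%AS); rewrite ?sub1v //.
    by apply/FadjoinP; rewrite sub1v seqv_sub_adjoin.
  by exists rs; rewrite ?p_split ?eqpxx.
have [g homg fg] := kHom_extends (sub1v _) homf p_over split_x.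
by exists g; rewrite // -fg ?memv_adjoin // (kHomExtend_val (kHom1 1 1)).
Qed.

End IrreducibleRoots.

Lemma kHom_eq0 (F : fieldType) (L : fieldExtType F) (K E : {subfield L}) f x :
  kHom K E f -> x \in E -> (f x == 0) = (x == 0).
Proof.
move=> homf Ex; apply/eqP/eqP => [fx0 | ->]; last exact: linear0.
have [f_fix f_mul] := kHomP_tmp homf.
apply: contra_eq fx0 => nz_x; apply: contraNneq (@oner_neq0 L) => fx0.
by rewrite -(f_fix 1) ?mem1v // -(mulfV nz_x) f_mul ?memvV // fx0 mul0r.
Qed.

Section IrreducibleRootsReal.

Variables (F : realFieldType) (L : fieldExtType F) (p : {poly F}).
Hypothesis p_irr : irreducible_poly p.
Local Notation lift q := (map_poly (in_alg L) q).

Lemma irr_roots_uniq (rs : seq L) : lift p = \prod_(r <- rs) ('X - r%:P) -> uniq rs.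
Proof.
case: rs => [|x rs] p_split.
  by have := p_irr.1; rewrite -(size_map_poly (in_alg L)) p_split big_nil size_poly1.
have px0 : root (lift p) x by rewrite p_split root_prod_XsubC mem_head.
have : separable_element 1 x.
  by apply: pcharf0_separable => q; rewrite pchar_lalg pchar_num.
rewrite /separable_element (eqp_separable (minPoly_eqp_irr p_irr px0)) p_split.
by rewrite separable_prod_XsubC.
Qed.

Lemma irr_root_scale x c :
  p.[0] != 0 -> root (lift p) x -> root (lift p) (c *: x) -> c = 1 \/ c = -1.
Proof.
move=> p0 px0 pcx0; have cn1 := irr_root_scale_expn p_irr p0 px0 pcx0.
have n_gt0 : (0 < (size p).-1)%N by rewrite -subn1 subn_gt0 p_irr.1.
have : `|c| == 1 by rewrite -(pexpr_eq1 n_gt0) ?normr_ge0 // -normrX cn1 normr1.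
by rewrite eqr_norml ler01 andbT => /orP[] /eqP; [left | right].
Qed.

Lemma irr_roots_indep x y (b d : F) :
    p.[0] != 0 -> root (lift p) x -> root (lift p) y -> y != x -> y != - x ->
  b *: x + d *: y = 0 -> b = 0 /\ d = 0.
Proof.
move=> p0 px0 py0 yx ynx bd0.
have d0 : d = 0.
  apply/eqP; apply: contraT => nz_d.
  have dy : d *: y = - (b *: x) by apply/eqP; rewrite -addr_eq0 addrC bd0.
  have y_scale : y = (- b / d) *: x.
    by apply: (scalerI nz_d); rewrite dy scalerA mulrC divfK // scaleNr.
  move: py0 yx ynx; rewrite y_scale => /(irr_root_scale p0 px0)[-> | ->].
    by rewrite scale1r eqxx.
  by rewrite scaleN1r eqxx.
split=> //; move/eqP: bd0; rewrite d0 scale0r addr0 scaler_eq0.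
by rewrite (negPf (root_map_neq0 p0 px0)) orbF => /eqP.
Qed.

Lemma irr_roots_flip_eq0 u v w (a b c d : F) :
    (2 < size p)%N -> p.[0] != 0 ->
    root (lift p) u -> root (lift p) v -> root (lift p) w -> w != v -> w != - v ->
    a%:A + b *: u + c *: v + d *: w = 0 -> a%:A + b *: u - c *: v - d *: w = 0 ->
  [/\ a = 0, b = 0, c = 0 & d = 0].
Proof.
move=> gt2p p0 pu0 pv0 pw0 wv wnv R1 R2.
have : (2%:R : F) *: (c *: v + d *: w) = 0.
  by rewrite scaler_nat -[RHS]subr0 -{1}R1 -R2; ring.
move/eqP; rewrite scaler_eq0 pnatr_eq0 /= => /eqP.
move=> /(irr_roots_indep p0 pv0 pw0 wv wnv) [c0 d0].
move: R1; rewrite c0 d0 !scale0r !addr0.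
by move=> /(irr_root_lin_eq0 p_irr gt2p pu0)[-> ->].
Qed.

End IrreducibleRootsReal.

Section PairedRoots.

Variables (F : realFieldType) (L : fieldExtType F) (p : {poly F}) (t1 t2 t3 : L).
Local Notation lift q := (map_poly (in_alg L) q).
Local Notation rs := [:: t1; - t1; t2; - t2; t3; - t3].
Hypotheses (p_irr : irreducible_poly p) (p_split : lift p = \prod_(r <- rs) ('X - r%:P)).
Hypothesis p0 : p.[0] = -1.

Let p0_neq0 : p.[0] != 0. Proof. by rewrite p0 oppr_eq0 oner_eq0. Qed.

Lemma root_paired r : root (lift p) r = (r \in rs).
Proof. by rewrite p_split root_prod_XsubC. Qed.

Lemma paired_root_neq0 r : r \in rs -> r != 0.
Proof. by rewrite -root_paired; apply: root_map_neq0. Qed.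

Lemma size_paired : size p = 7.
Proof. by rewrite -(size_map_poly (in_alg L)) p_split size_prod_XsubC. Qed.

Lemma paired_roots_neq : t2 \notin [:: t1; - t1] /\ t3 \notin [:: t1; - t1; t2; - t2].
Proof.
have := irr_roots_uniq p_irr p_split; rewrite /= !inE !negb_or -!andbA.
case/and5P=> _ n12 _ n13 /and5P[_ nN12 _ nN13 /and5P[_ _ n23 _ /andP[nN23 _]]].
by rewrite ![t2 == _]eq_sym ![t3 == _]eq_sym n12 nN12 n13 nN13 n23 nN23.
Qed.

Lemma paired_roots_prod_sqr : (t1 * t2 * t3) ^+ 2 = 1.
Proof.
have := congr1 (horner^~ 0) p_split; rewrite /= horner_prod !big_cons big_nil.
rewrite !hornerXsubC horner_coef0 coef_map /= -horner_coef0 p0 scaleN1r => p0_prod.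
by rewrite -[RHS]opprK p0_prod; ring.
Qed.

Lemma paired_conj_neg_t1 : exists g : 'End(L), [/\ g 1 = 1, g t1 = - t1 &
  [\/ g t2 = t2 /\ g t3 = - t3, g t2 = - t2 /\ g t3 = t3,
      g t2 = t3 /\ g t3 = - t2 | g t2 = - t3 /\ g t3 = t2]].
Proof.
have [] := paired_roots_neq; rewrite !inE !negb_or => /andP[n21 n2N1] _.
have rs_Nt1 : - t1 \in rs by rewrite !inE eqxx orbT.
have [g homg gt1] := kHom_conj_root p_irr p_split (mem_head _ _) rs_Nt1.
have [g_fix g_mul] := kHomP_tmp homg.
have E_rs r : r \in rs -> r \in <<1 & rs>>%VS by apply: seqv_sub_adjoin.
have [E1 E2 E3] : [/\ t1 \in <<1 & rs>>%VS, t2 \in <<1 & rs>>%VS & t3 \in <<1 & rs>>%VS].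
  by split; apply: E_rs; rewrite !inE eqxx ?orbT.
have g_prod : g t2 * g t3 = - (t2 * t3).
  have prod_fix : g (t1 * t2 * t3) = t1 * t2 * t3.
    apply: g_fix; have /eqP := paired_roots_prod_sqr.
    by rewrite sqrf_eq1 => /orP[] /eqP ->; rewrite ?rpredN mem1v.
  apply: (mulfI (paired_root_neq0 rs_Nt1)).
  by rewrite mulrA -{1}gt1 -!g_mul ?rpredM // prod_fix; ring.
have g_t3 s v : g t2 = s -> s * v = - (t2 * t3) -> g t3 = v.
  move=> g_t2 sv; apply: (mulfI (_ : s != 0)); last by rewrite sv -g_prod g_t2.
  by rewrite -g_t2 (kHom_eq0 homg E2) paired_root_neq0 // !inE eqxx ?orbT.
exists g; split=> //; first exact: g_fix (mem1v _).
have p_over : lift p \is a polyOver 1%VS by apply/polyOver1P; exists p.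
have : g t2 \in rs.
  rewrite -root_paired (kHom_root_id (sub1v _) homg p_over E2) //.
  by rewrite root_paired !inE eqxx ?orbT.
rewrite !inE => /orP[/eqP g2 | /orP[/eqP g2 | /orP[/eqP g2 |
                /orP[/eqP g2 | /orP[/eqP g2 | /eqP g2]]]]].
- have : g (t2 + t1) == 0 by rewrite linearD /= g2 gt1 subrr.
  by rewrite (kHom_eq0 homg) ?rpredD // addr_eq0 (negPf n2N1).
- have : g (t2 - t1) == 0 by rewrite linearB /= g2 gt1 subrr.
  by rewrite (kHom_eq0 homg) ?rpredB // subr_eq0 (negPf n21).
- by apply: Or41; rewrite (g_t3 _ (- t3) g2) ?mulrN.
- by apply: Or42; rewrite (g_t3 _ t3 g2) ?mulNr.
- by apply: Or43; rewrite (g_t3 _ (- t2) g2) // mulrN mulrC.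
- by apply: Or44; rewrite (g_t3 _ t2 g2) // mulNr mulrC.
Qed.

Lemma paired_relation_flip (a b1 b2 b3 : F) :
    a%:A + b1 *: t1 + b2 *: t2 + b3 *: t3 = 0 ->
  [\/ a%:A + b1 *: t1 - b2 *: t2 - b3 *: t3 = 0,
      a%:A + b2 *: t2 - b1 *: t1 - b3 *: t3 = 0
    | a%:A + b3 *: t3 - b1 *: t1 - b2 *: t2 = 0].
Proof.
move=> R; have [g [g1 gt1 g_t23]] := paired_conj_neg_t1.
have g_rel x1 x2 x3 : a%:A + b1 *: x1 + b2 *: x2 + b3 *: x3 = 0 ->
    a%:A + b1 *: g x1 + b2 *: g x2 + b3 *: g x3 = 0.
  by move/(congr1 g); rewrite !linearD !linearZ /= g1 linear0.
have g_opp x : g (- x) = - g x by rewrite linearN.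
case: g_t23 => [[g2 g3] | [g2 g3] | [g2 g3] | [g2 g3]].
- by apply: Or32; move: (g_rel _ _ _ R); rewrite gt1 g2 g3 !scalerN => <-; ring.
- by apply: Or33; move: (g_rel _ _ _ R); rewrite gt1 g2 g3 !scalerN => <-; ring.
- apply: Or31; move: (g_rel _ _ _ (g_rel _ _ _ R)).
  by rewrite !(g_opp, gt1, g2, g3) !scalerN => <-; ring.
- apply: Or31; move: (g_rel _ _ _ (g_rel _ _ _ R)).
  by rewrite !(g_opp, gt1, g2, g3) !scalerN => <-; ring.
Qed.

Lemma paired_relation_eq0 (a b1 b2 b3 : F) :
    a%:A + b1 *: t1 + b2 *: t2 + b3 *: t3 = 0 ->
  [/\ a = 0, b1 = 0, b2 = 0 & b3 = 0].
Proof.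
move=> R; have [] := paired_roots_neq; rewrite !inE !negb_or.
move=> /andP[n21 n2N1] /and4P[n31 n3N1 n32 n3N2].
have gt2p : (2 < size p)%N by rewrite size_paired.
have [pt1 pt2 pt3] : [/\ root (lift p) t1, root (lift p) t2 & root (lift p) t3].
  by split; rewrite root_paired !inE eqxx ?orbT.
have flip_eq0 := irr_roots_flip_eq0 (L := L) p_irr gt2p p0_neq0.
case: (paired_relation_flip R) => R'.
- exact: flip_eq0 pt1 pt2 pt3 n32 n3N2 R R'.
- have [|-> -> -> ->] // := flip_eq0 _ _ _ a b2 b1 b3 pt2 pt1 pt3 n31 n3N1 _ R'.
  by rewrite -R; ring.
- have [|-> -> -> ->] // := flip_eq0 _ _ _ a b3 b1 b2 pt3 pt1 pt2 n21 n2N1 _ R'.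
  by rewrite -R; ring.
Qed.

End PairedRoots.

Lemma seq4_free (K : fieldType) (V : vectType K) (v0 v1 v2 v3 : V) :
    (forall a0 a1 a2 a3, a0 *: v0 + a1 *: v1 + a2 *: v2 + a3 *: v3 = 0 ->
       [/\ a0 = 0, a1 = 0, a2 = 0 & a3 = 0]) ->
  free [:: v0; v1; v2; v3].
Proof.
move=> rel_eq0; apply/(@freeP _ _ 4 [tuple v0; v1; v2; v3]) => k.
rewrite !big_ord_recl big_ord0 addr0 !addrA => /rel_eq0[k0 k1 k2 k3].
by case=> [[|[|[|[|//]]]] ?]; [rewrite -k0 | rewrite -k1 | rewrite -k2 | rewrite -k3];
  congr k; apply: val_inj.
Qed.

Theorem theorem2p5 (l m : nat) (L : fieldExtType rat) (t1 t2 t3 : L) :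
  (0 < l)%nat -> (0 < m)%nat ->
  map_poly (in_alg L) (q_lm l m) =
    \prod_(r <- [:: t1; - t1; t2; - t2; t3; - t3]) ('X - r%:P) ->
  irreducible_poly (q_lm l m) ->
  free [:: 1; t1; t2; t3].
Proof.
move=> _ _ q_split q_irr; apply: seq4_free => a b1 b2 b3.
apply: (paired_relation_eq0 q_irr q_split).
rewrite /q_lm !(hornerD, hornerN, hornerZ, hornerXn, hornerC) !expr0n /=.
by rewrite !mulr0 subr0 addr0 sub0r.
Qed.
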